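(* Let $G$ be a graph, let $\epsilon,\epsilon'$ be positive constants with $\epsilon+\epsilon'<1/2$, let $K$ be a set of nodes that is $\epsilon$-almost-clique-like, and let $T$ be the $i$-th bucket of a $k$-bucketing of $K$ which is $\epsilon'$-almost-clique-preserved. Then $|T|\in(1\pm 2(\epsilon+\epsilon'))|K|/k$, and $T$ is $2(\epsilon+\epsilon')$-almost-clique-like.
   Context: $N(v)$ is the set of neighbors of $v$ in $G$. For $\epsilon\in(0,1/2)$, a set of nodes $K$ is $\epsilon$-almost-clique-like if $|N(v)\cap K|\ge(1-\epsilon)|K|$ for all $v\in K$. A $k$-bucketing of $K$ is an assignment of a value $t(v)\in[k]$ to each $v\in K$, defining buckets $T_j=\{v\in K: t(v)=j\}$ for $j\in[k]$. The bucketing $\epsilon'$-almost-clique-preserves its $i$-th bucket $T_i$ if for every $v\in K$, $|N(v)\cap T_i|\in(1\pm\epsilon')|N(v)\cap K|/k$. The notation $x\in(1\pm\delta)y$ means $(1-\delta)y\le x\le(1+\delta)y$. *)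

From HB Require Import structures.
From mathcomp Require Import all_boot all_order all_algebra.
Set Implicit Arguments. Unset Strict Implicit. Unset Printing Implicit Defensive.
Import Order.TTheory GRing.Theory Num.Theory.
Local Open Scope ring_scope.

Definition simple_graph (V : finType) (adj : rel V) : Prop :=
  symmetric adj /\ irreflexive adj.

Definition nbhd (V : finType) (adj : rel V) (v : V) : {set V} :=
  [set u | adj v u].

Definition in_pm (R : numDomainType) (x d y : R) : Prop :=
  (1 - d) * y <= x /\ x <= (1 + d) * y.

Definition almost_clique_like (R : numDomainType) (V : finType) (adj : rel V)
  (eps : R) (K : {set V}) : Prop :=
  forall v, v \in K -> (1 - eps) * #|K|%:R <= #|nbhd adj v :&: K|%:R.

Definition bucket (V : finType) (k : nat) (K : {set V}) (t : V -> 'I_k)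
  (j : 'I_k) : {set V} :=
  [set v in K | t v == j].

Definition clique_preserves (R : numFieldType) (V : finType) (adj : rel V)
  (eps' : R) (k : nat) (K : {set V}) (t : V -> 'I_k) (i : 'I_k) : Prop :=
  forall v, v \in K ->
    in_pm #|nbhd adj v :&: bucket K t i|%:R eps' (#|nbhd adj v :&: K|%:R / k%:R).

From HB Require Import structures.
From mathcomp Require Import all_boot all_order all_algebra.
From mathcomp Require Import lra.
Set Implicit Arguments. Unset Strict Implicit. Unset Printing Implicit Defensive.
Import Order.TTheory GRing.Theory Num.Theory.
Local Open Scope ring_scope.

(* Write x = |K|/k.  Every v in K sees between (1-eps)(1-eps') x and
   (1+eps') x vertices of T, so |T| >= (1-eps)(1-eps') x as soon as K is
   nonempty.  Counting the edges between K and T from both sides gives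
   |T| (1-eps) |K| <= sum_(v in K) |N(v) :&: T| <= |K| (1+eps') x, i.e.
   |T| <= (1+eps') x / (1-eps). *)

Lemma card_nbhdI (V : finType) (adj : rel V) (v : V) (B : {set V}) :
  #|nbhd adj v :&: B| = (\sum_(u in B) adj v u)%N.
Proof.
rewrite -sum1_card big_mkcond [RHS]big_mkcond; apply: eq_bigr => u _.
by rewrite !inE; case: (adj v u); case: (u \in B).
Qed.

Lemma sum_card_nbhdI_sym (V : finType) (adj : rel V) (A B : {set V}) :
  symmetric adj ->
  (\sum_(v in A) #|nbhd adj v :&: B| = \sum_(u in B) #|nbhd adj u :&: A|)%N.
Proof.
move=> adj_sym; under eq_bigr do rewrite card_nbhdI.
under [RHS]eq_bigr do rewrite card_nbhdI.
by rewrite exchange_big; apply: eq_bigr => u _; apply: eq_bigr => v _; rewrite adj_sym.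
Qed.

Lemma bucket_sub (V : finType) (k : nat) (K : {set V}) (t : V -> 'I_k) (j : 'I_k) :
  bucket K t j \subset K.
Proof. by apply/subsetP => u; rewrite inE => /andP[]. Qed.

Section BucketBounds.

Variables (R : realFieldType) (V : finType) (adj : rel V) (eps eps' : R).
Variables (K : {set V}) (k : nat) (t : V -> 'I_k) (i : 'I_k).
Hypothesis K_clique : almost_clique_like adj eps K.
Hypothesis T_preserved : clique_preserves adj eps' K t i.

Local Notation T := (bucket K t i).
Local Notation x := (#|K|%:R / k%:R : R).

Let k_gt0 : (0 : R) < k%:R.
Proof. by rewrite ltr0n; apply: leq_ltn_trans (ltn_ord i). Qed.

Let x_ge0 : 0 <= x.
Proof. by rewrite divr_ge0 // ler0n. Qed.

Lemma nbhd_bucket_ge (v : V) : eps' <= 1 -> v \in K ->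
  (1 - eps) * (1 - eps') * x <= #|nbhd adj v :&: T|%:R.
Proof.
move=> eps'_le1 vK; have [+ _] := T_preserved vK; apply: le_trans.
rewrite [_ * (1 - eps')]mulrC -mulrA ler_wpM2l ?subr_ge0 //.
by rewrite mulrA ler_pM2r ?invr_gt0 //; apply: K_clique.
Qed.

Lemma nbhd_bucket_le (v : V) : 0 <= eps' -> v \in K ->
  #|nbhd adj v :&: T|%:R <= (1 + eps') * x.
Proof.
move=> eps'_ge0 vK; have [_] := T_preserved vK; move/le_trans; apply.
rewrite ler_wpM2l ?(addr_ge0 ler01) //.
by rewrite ler_pM2r ?invr_gt0 // ler_nat subset_leq_card // subsetIr.
Qed.

Lemma card_bucket_ge : eps' <= 1 -> (1 - eps) * (1 - eps') * x <= #|T|%:R.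
Proof.
move=> eps'_le1; have [-> | [v vK]] := set_0Vmem K.
  by rewrite cards0 mul0r mulr0.
apply: le_trans (nbhd_bucket_ge eps'_le1 vK) _.
by rewrite ler_nat subset_leq_card // subsetIr.
Qed.

Lemma card_bucket_le : symmetric adj -> 0 <= eps' ->
  #|T|%:R * (1 - eps) <= (1 + eps') * x.
Proof.
move=> adj_sym eps'_ge0; have [K0 | K_gt0] := posnP #|K|.
  have /eqP -> : #|T| == 0%N.
    by rewrite -leqn0 -K0 subset_leq_card // bucket_sub.
  by rewrite mul0r mulr_ge0 // addr_ge0.
rewrite -(@ler_pM2l _ #|K|%:R) ?ltr0n //.
have /(congr1 (fun n : nat => n%:R : R)) := sum_card_nbhdI_sym K T adj_sym.
rewrite !natr_sum => edges.
apply: (@le_trans _ _ (\sum_(v in K) #|nbhd adj v :&: T|%:R)).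
  rewrite edges mulrCA mulrC mulr_natr -sumr_const.
  apply: ler_sum => u uT; rewrite mulrC.
  by apply: K_clique; exact: (subsetP (bucket_sub K t i)).
rewrite mulrC mulr_natr -sumr_const; apply: ler_sum => v vK.
exact: nbhd_bucket_le.
Qed.

Lemma card_bucket_in_pm : symmetric adj -> 0 <= eps -> 0 <= eps' ->
  eps + eps' < 1 / 2 -> in_pm #|T|%:R (2 * (eps + eps')) x.
Proof.
move=> adj_sym eps_ge0 eps'_ge0 small_eps.
have eps_lt1 : 0 < 1 - eps by lra.
split.
  apply: le_trans (card_bucket_ge _) => //; last by lra.
  rewrite ler_wpM2r //; nra.
rewrite -(ler_pM2r eps_lt1); apply: le_trans (card_bucket_le adj_sym eps'_ge0) _.
rewrite mulrAC ler_wpM2r //; nra.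
Qed.

Lemma bucket_almost_clique_like : symmetric adj -> 0 <= eps -> 0 <= eps' ->
  eps + eps' < 1 / 2 -> almost_clique_like adj (2 * (eps + eps')) T.
Proof.
move=> adj_sym eps_ge0 eps'_ge0 small_eps v vT.
have vK := subsetP (bucket_sub K t i) v vT.
have eps_lt1 : 0 < 1 - eps by lra.
have factors : (1 - 2 * (eps + eps')) * (1 + eps') <= (1 - eps) * (1 - eps') * (1 - eps).
  have : 0 <= eps ^+ 2 * (1 - eps') by rewrite mulr_ge0 ?sqr_ge0 //; lra.
  nra.
apply: le_trans (nbhd_bucket_ge _ vK); last by lra.
rewrite -(ler_pM2r eps_lt1) -[X in X <= _]mulrA [X in _ <= X]mulrAC.
apply: le_trans (ler_wpM2l _ (card_bucket_le adj_sym eps'_ge0)) _; first by lra.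
by rewrite mulrA ler_wpM2r.
Qed.

End BucketBounds.

Theorem lemma4p6 (R : realFieldType) (V : finType) (adj : rel V)
  (eps eps' : R) (K : {set V}) (k : nat) (t : V -> 'I_k) (i : 'I_k) :
  simple_graph adj ->
  0 < eps -> 0 < eps' -> eps + eps' < 1 / 2 ->
  almost_clique_like adj eps K ->
  clique_preserves adj eps' K t i ->
  in_pm #|bucket K t i|%:R (2 * (eps + eps')) (#|K|%:R / k%:R) /\
  almost_clique_like adj (2 * (eps + eps')) (bucket K t i).
Proof.
move=> [adj_sym _] /ltW eps_ge0 /ltW eps'_ge0 small_eps K_clique T_preserved.
split.
  exact: (card_bucket_in_pm K_clique T_preserved adj_sym eps_ge0 eps'_ge0 small_eps).
exact: (bucket_almost_clique_like K_clique T_preserved adj_sym eps_ge0 eps'_ge0 small_eps).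
Qed.
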